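(* Run the mechanism BFM-SWM described in the context with arbitrary $B>0$, $\alpha>1$, $\beta>1$, $\epsilon>0$, $\ell\in\{1,2\}$, with all sellers behaving truthfully, and let $M$, $\rho_M$, $S^*$ be as defined in the context. If $M\ge 2$, then $$\rho_M\ \le\ 2\alpha\big(v(S^* )-p(S^* )\big).$$
   Context: Setting. $\mathcal{N}$ is a finite set of $n$ sellers. The valuation $v:2^{\mathcal{N}}\to\mathbb{R}_{\ge 0}$ satisfies $v(\emptyset)=0$ and is submodular (for $X\subseteq Y\subseteq\mathcal{N}$ and $u\notin Y$, $v(u\mid Y)\le v(u\mid X)$), not necessarily monotone, where $v(S\mid T)=v(S\cup T)-v(T)$, $v(u\mid T)=v(\{u\}\mid T)$. Each seller $u$ has a private cost $c(u)\ge 0$; $c(X)=\sum_{u\in X}c(u)$, $p(X)=\sum_{u\in X}p(u)$. $B>0$ is the budget, $[\ell]=\{1,\dots,\ell\}$. Sellers behave truthfully: a seller $u$ offered price $q$ accepts iff $c(u)\le q$. Mechanism BFM-SWM (inputs $B$, $\alpha>1$, $\beta>1$, $\epsilon>0$, $\ell\in\{1,2\}$): 1. Offer every seller the price $B$; let $R$ be the set of sellers who accept, and set $p(u)=B$ for $u\in R$. 2. Set $t=0$, $\rho_0=\epsilon/\alpha$, $u^*=\emptyset$ ($u^*$ is a set of at most one seller), and $S_{i,0}=\emptyset$ for $i\in[\ell]$. 3. Repeat rounds: set $t\leftarrow t+1$, $\rho_t=\alpha\rho_{t-1}$, $S_{i,t}=\emptyset$ for all $i\in[\ell]$. Process the sellers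 $u\in R\setminus(\bigcup_{i=1}^{\ell}S_{i,t-1}\cup u^* )$ one at a time in a fixed order. For each such $u$: pick $j\in\arg\max_{i\in[\ell]}v(u\mid S_{i,t})$ (current contents); update $p(u)\leftarrow\min\{p(u),\ v(u\mid S_{j,t})/(\beta+\rho_t/B)\}$ and offer $p(u)$ to $u$. If $u$ accepts: if $v(S_{j,t}\cup\{u\})-p(S_{j,t}\cup\{u\})>\rho_t$ (current prices), set $u^*\leftarrow\{u\}$ and end the round immediately; otherwise add $u$ to $S_{j,t}$. If $u$ rejects, remove $u$ from $R$. After the round, stop if $R\setminus\left(\bigcup_{i=1}^{\ell}(S_{i,t-1}\cup S_{i,t})\cup u^*\right)=\emptyset$; otherwise start another round. 4. Let $M$ be the final value of $t$ (the number of rounds). Output $S^*\in\arg\max_{A\in\{S_{i,t}: i\in[\ell],\ t\in\{M-1,M\}\}\cup\{u^*\}}\big(v(A)-p(A)\big)$, paying each $u\in S^*$ its current price $p(u)$; $p(S^* )$ is the total payment. *)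

From mathcomp Require Import all_boot all_order all_algebra.
Set Implicit Arguments. Unset Strict Implicit. Unset Printing Implicit Defensive.
Import Order.TTheory GRing.Theory Num.Theory.
Local Open Scope ring_scope.

Section Mech.
Variables (R : realFieldType) (T : finType).

Definition psum (p : T -> R) (A : {set T}) : R := \sum_(u in A) p u.

Definition marg (v : {set T} -> R) (S : {set T}) (u : T) : R := v (u |: S) - v S.

Definition submodular (v : {set T} -> R) : Prop :=
  forall (X Y : {set T}) (u : T), X \subset Y -> u \notin Y ->
    marg v Y u <= marg v X u.

Variables (v : {set T} -> R) (c : T -> R) (B alpha beta eps : R)
          (l : nat) (order : seq T) (tie : nat -> T -> bool).

Definition rho (t : nat) : R := eps / alpha * alpha ^+ t.

(* two sets S_1, S_2 exist iff l = 2 *)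
Definition two : bool := (l == 2)%N.

Record rstate := RState {
  rR : {set T};  rp : T -> R;  ru : {set T};
  rS1 : {set T}; rS2 : {set T}; rstop : bool }.

(* processing of one seller u in round t; ties in the argmax over [l]
   are broken by the arbitrary rule [tie t u] (true = choose index 2). *)
Definition process (t : nat) (s : rstate) (u : T) : rstate :=
  if rstop s then s else
  let g1 := marg v (rS1 s) u in
  let g2 := marg v (rS2 s) u in
  let j2 := two && ((g1 < g2) || ((g1 == g2) && tie t u)) in
  let Sj := if j2 then rS2 s else rS1 s in
  let gj := if j2 then g2 else g1 in
  let q := Order.min (rp s u) (gj / (beta + rho t / B)) in
  let p' := fun w => if w == u then q else rp s w in
  if c u <= q then
    if rho t < v (u |: Sj) - psum p' (u |: Sj)
    then RState (rR s) p' [set u] (rS1 s) (rS2 s) true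
    else if j2 then RState (rR s) p' (ru s) (rS1 s) (u |: rS2 s) false
         else RState (rR s) p' (ru s) (u |: rS1 s) (rS2 s) false
  else RState (rR s :\ u) p' (ru s) (rS1 s) (rS2 s) false.

(* global state after round t: R, prices, u*, S_{i,t-1}, S_{i,t} *)
Record mstate := MState {
  mR : {set T}; mp : T -> R; mu : {set T};
  mP1 : {set T}; mP2 : {set T}; mC1 : {set T}; mC2 : {set T} }.

Definition round (t : nat) (s : mstate) : mstate :=
  let L := [seq u <- order | (u \in mR s) && (u \notin mC1 s :|: mC2 s :|: mu s)] in
  let r := foldl (process t) (RState (mR s) (mp s) (mu s) set0 set0 false) L in
  MState (rR r) (rp r) (ru r) (mC1 s) (mC2 s) (rS1 r) (rS2 r).

Definition init_state : mstate :=
  MState [set u | c u <= B] (fun _ => B) set0 set0 set0 set0 set0.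

Fixpoint run (k : nat) : mstate :=
  match k with 0 => init_state | k'.+1 => round k'.+1 (run k') end.

Definition stops_after (k : nat) : bool :=
  let s := run k in mR s :\: (mP1 s :|: mP2 s :|: mC1 s :|: mC2 s :|: mu s) == set0.

Definition num_rounds (M : nat) : Prop :=
  (1 <= M)%N /\ stops_after M /\ forall k, (1 <= k < M)%N -> ~~ stops_after k.

Definition candidates (M : nat) : seq {set T} :=
  let s := run M in
  [:: mP1 s; mC1 s; mu s] ++ (if two then [:: mP2 s; mC2 s] else [::]).

Definition net (M : nat) (A : {set T}) : R := v A - psum (mp (run M)) A.

End Mech.

(* If round M ended by setting u*, then u* and the set S_{j,M} it was about
   to join are both candidates; their union has surplus v - p above rho_M,
   and submodularity (with additivity of prices) bounds that surplus by
   twice the largest candidate surplus, the one of S^*.  Otherwise round M-1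
   must have ended by setting u*, since a completed round M-1 would have
   stopped the mechanism; round M then keeps u* and the prices of u* and of
   S_{j,M-1}, so the same argument bounds rho_{M-1} = rho_M / alpha. *)

From Pilot Require Import Defs.
From mathcomp Require Import all_boot all_order all_algebra.
From mathcomp Require Import lra.
Set Implicit Arguments. Unset Strict Implicit. Unset Printing Implicit Defensive.
Import Order.TTheory GRing.Theory Num.Theory.
Local Open Scope ring_scope.

Definition surplus (R : realFieldType) (T : finType) (v : {set T} -> R)
  (p : T -> R) (A : {set T}) : R := v A - psum p A.

Lemma eq_surplus (R : realFieldType) (T : finType) (v : {set T} -> R)
  (p q : T -> R) (A : {set T}) :
  {in A, p =1 q} -> surplus v p A = surplus v q A.
Proof. by move=> eq_pq; rewrite /surplus /psum (eq_bigr _ eq_pq). Qed.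

Section Surplus.
Variables (R : realFieldType) (T : finType) (v : {set T} -> R).
Hypotheses (v0 : v set0 = 0) (v_sub : submodular v).

Lemma submodular_setU1_le (S : {set T}) (u : T) :
  u \notin S -> v (u |: S) <= v S + v [set u].
Proof.
move=> uS; have := v_sub (sub0set S) uS.
rewrite /marg setU0 v0 subr0; lra.
Qed.

Lemma surplus_setU1_le (p : T -> R) (S : {set T}) (u : T) (N : R) :
  0 <= surplus v p (u |: S) -> surplus v p S <= N -> surplus v p [set u] <= N ->
  surplus v p (u |: S) <= 2 * N.
Proof.
rewrite /surplus /psum => ge0 le_S le_u.
have [uS | uS] := boolP (u \in S).
  by move: ge0; rewrite (setUidPr _) ?sub1set //; lra.
rewrite big_set1 in le_u; rewrite big_setU1 //= in ge0 *.
have := submodular_setU1_le uS; lra.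
Qed.

End Surplus.

Lemma rho_gt0 (R : realFieldType) (alpha eps : R) (t : nat) :
  0 < alpha -> 0 < eps -> 0 < rho alpha eps t.
Proof. by move=> alpha0 eps0; rewrite /rho !mulr_gt0 ?invr_gt0 ?exprn_gt0. Qed.

Lemma rhoS (R : realFieldType) (alpha eps : R) (t : nat) :
  rho alpha eps t.+1 = alpha * rho alpha eps t.
Proof. by rewrite /rho exprS mulrCA. Qed.

Section Round.
Variables (R : realFieldType) (T : finType) (v : {set T} -> R) (c : T -> R)
  (B alpha beta eps : R) (l : nat) (tie : nat -> T -> bool).

Local Notation process := (process v c B alpha beta eps l tie).

Lemma process_stopped t (s : rstate R T) u : rstop s -> process t s u = s.
Proof. by rewrite /Defs.process => ->. Qed.

Lemma foldl_process_stopped t s L : rstop s -> foldl (process t) s L = s.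
Proof. by move=> st; elim: L => //= u L; rewrite process_stopped. Qed.

Lemma foldl_process_unstopped t s L :
  ~~ rstop (foldl (process t) s L) -> ~~ rstop s.
Proof. by apply: contra => st; rewrite foldl_process_stopped. Qed.

Lemma process_unstopped t s u (s' := process t s u) : ~~ rstop s' ->
  [/\ ru s' = ru s, (forall w, w != u -> rp s' w = rp s w), rR s' \subset rR s,
      (u \in rR s' -> u \in rS1 s' :|: rS2 s') &
      (rS1 s \subset rS1 s') && (rS2 s \subset rS2 s')].
Proof.
rewrite {}/s' /Defs.process; case: ifP => [-> // | _ /=].
case: ifP => _ /=; last first.
  by move=> _; split; rewrite ?subD1set ?subxx ?inE ?eqxx // => w /negbTE ->.
case: ifP => // _ _; case: ifP => _; split; rewrite ?subxx ?subsetUr ?inE ?eqxx ?orbT //;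
  by move=> w /= /negbTE ->.
Qed.

Lemma foldl_process_ru t s L : ~~ rstop (foldl (process t) s L) ->
  ru (foldl (process t) s L) = ru s.
Proof.
elim: L s => //= u L IH s st.
rewrite IH //; by case: (process_unstopped (foldl_process_unstopped st)).
Qed.

Lemma foldl_process_rp t s L w : ~~ rstop (foldl (process t) s L) ->
  w \notin L -> rp (foldl (process t) s L) w = rp s w.
Proof.
elim: L s => //= u L IH s st; rewrite inE negb_or => /andP[wu wL].
rewrite IH //; by case: (process_unstopped (foldl_process_unstopped st)) => _ ->.
Qed.

Lemma foldl_process_mono t s L (r := foldl (process t) s L) : ~~ rstop r ->
  [/\ rR r \subset rR s, rS1 s \subset rS1 r & rS2 s \subset rS2 r].
Proof.
rewrite {}/r; elim: L s => [|u L IH] s /=; first by rewrite !subxx.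
move=> st; have [_ _ sR _ /andP[s1 s2]] := process_unstopped (foldl_process_unstopped st).
have [sR' s1' s2'] := IH _ st.
by split; [exact: subset_trans sR' sR | exact: subset_trans s1 s1' | exact: subset_trans s2 s2'].
Qed.

Lemma foldl_process_covers t s L w (r := foldl (process t) s L) : ~~ rstop r ->
  w \in L -> w \in rR r -> w \in rS1 r :|: rS2 r.
Proof.
rewrite {}/r; elim: L s => //= u L IH s st.
have [_ _ _ cover_u _] := process_unstopped (foldl_process_unstopped st).
have [sR s1 s2] := foldl_process_mono st.
rewrite inE => /orP[/eqP-> uR | wL]; last exact: IH.
have := cover_u (subsetP sR _ uR).
by rewrite !inE => /orP[/(subsetP s1) | /(subsetP s2)] ->; rewrite ?orbT.
Qed.

Definition stop_certificate t (r : rstate R T) : Prop :=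
  exists u S, [/\ S = rS1 r \/ two l /\ S = rS2 r, ru r = [set u] &
                  rho alpha eps t < surplus v (rp r) (u |: S)].

Lemma process_certificate t s u : (rstop s -> stop_certificate t s) ->
  rstop (process t s u) -> stop_certificate t (process t s u).
Proof.
rewrite /Defs.process; case: (rstop s) => [cert|_] //=; first by move=> _; exact: cert.
case: ifP => // _; case: ifP => [lt_rho _ | _]; last by case: ifP.
set j2 := two l && _ in lt_rho *.
exists u, (if j2 then rS2 s else rS1 s); split => //.
by case j2E: j2; [right; move: j2E => /andP[] | left].
Qed.

Lemma foldl_process_certificate t s L : (rstop s -> stop_certificate t s) ->
  rstop (foldl (process t) s L) -> stop_certificate t (foldl (process t) s L).
Proof.
by elim: L s => //= u L IH s cert; apply: IH; apply: process_certificate.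
Qed.

End Round.

Section Mechanism.
Variables (R : realFieldType) (T : finType) (v : {set T} -> R) (c : T -> R)
  (B alpha beta eps : R) (l : nat) (order : seq T) (tie : nat -> T -> bool).

Local Notation process := (process v c B alpha beta eps l tie).
Local Notation run := (run v c B alpha beta eps l order tie).
Local Notation candidates := (candidates v c B alpha beta eps l order tie).
Local Notation net := (net v c B alpha beta eps l order tie).

Definition to_process (s : mstate R T) : seq T :=
  [seq u <- order | (u \in mR s) && (u \notin mC1 s :|: mC2 s :|: mu s)].

Definition round_end t (s : mstate R T) : rstate R T :=
  foldl (process t) (RState (mR s) (mp s) (mu s) set0 set0 false) (to_process s).

Definition interrupted t (s : mstate R T) : bool := rstop (round_end t s).

Lemma interrupted_round_certificate k : interrupted k.+1 (run k) ->
  exists u S, [/\ S = mC1 (run k.+1) \/ two l /\ S = mC2 (run k.+1),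
                  mu (run k.+1) = [set u] &
                  rho alpha eps k.+1 < surplus v (mp (run k.+1)) (u |: S)].
Proof. exact: foldl_process_certificate. Qed.

Lemma uninterrupted_round_keeps k : ~~ interrupted k.+1 (run k) ->
  mu (run k.+1) = mu (run k) /\
  {in mC1 (run k) :|: mC2 (run k) :|: mu (run k), mp (run k.+1) =1 mp (run k)}.
Proof.
move=> st; split; first exact: (foldl_process_ru st).
by move=> w wS; apply: (foldl_process_rp st); rewrite mem_filter wS andbF.
Qed.

Lemma candidates_mu k : mu (run k) \in candidates k.
Proof. by rewrite /candidates mem_cat !inE eqxx ?orbT. Qed.

Lemma candidates_current k S :
  S = mC1 (run k) \/ two l /\ S = mC2 (run k) -> S \in candidates k.
Proof.
by case=> [->|[two_l ->]]; rewrite /candidates ?two_l mem_cat !inE eqxx ?orbT.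
Qed.

Lemma candidates_previous k S :
  S = mC1 (run k) \/ two l /\ S = mC2 (run k) -> S \in candidates k.+1.
Proof.
by case=> [->|[two_l ->]]; rewrite /candidates ?two_l mem_cat !inE eqxx ?orbT.
Qed.

Hypothesis order_enum : perm_eq order (enum T).
Hypotheses (v0 : v set0 = 0) (v_sub : submodular v).
Hypotheses (alpha1 : 1 < alpha) (eps0 : 0 < eps).

Lemma uninterrupted_round_stops k :
  ~~ interrupted k.+1 (run k) -> stops_after v c B alpha beta eps l order tie k.+1.
Proof.
move=> st; set s := run k; set r := round_end k.+1 s.
have [sR _ _] := foldl_process_mono st.
have [mu_same _] := uninterrupted_round_keeps st.
change (rR r :\: (mC1 s :|: mC2 s :|: rS1 r :|: rS2 r :|: mu (run k.+1)) == set0).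
rewrite mu_same; apply/eqP/setP => w; rewrite !inE.
case wR: (w \in rR r); rewrite ?andbF // andbT; apply: negbF.
have [wL | wL] := boolP (w \in to_process s).
  by case/setUP: (foldl_process_covers st wL wR) => ->; rewrite ?orbT.
move: wL; rewrite mem_filter (perm_mem order_enum) mem_enum (subsetP sR _ wR) andbT.
by rewrite negbK !inE => /orP[/orP[]|] ->; rewrite ?orbT.
Qed.

Lemma rho_le_twice_net M N t S u :
  (forall A, A \in candidates M -> net M A <= N) ->
  S \in candidates M -> [set u] \in candidates M ->
  rho alpha eps t < surplus v (mp (run M)) (u |: S) -> rho alpha eps t <= 2 * N.
Proof.
move=> le_N S_cand u_cand lt_rho; apply: (le_trans (ltW lt_rho)).
apply: surplus_setU1_le => //.
- exact: ltW (lt_trans (rho_gt0 t (lt_trans ltr01 alpha1) eps0) lt_rho).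
- exact: le_N S_cand.
- exact: le_N u_cand.
Qed.

Lemma interrupted_last_round_bound m N :
  (forall A, A \in candidates m.+1 -> net m.+1 A <= N) ->
  interrupted m.+1 (run m) -> rho alpha eps m.+1 <= 2 * N.
Proof.
move=> le_N /interrupted_round_certificate[u [S [S_cur mu_u lt_rho]]].
apply: rho_le_twice_net le_N (candidates_current S_cur) _ lt_rho.
by rewrite -mu_u candidates_mu.
Qed.

Lemma interrupted_previous_round_bound m N :
  (forall A, A \in candidates m.+2 -> net m.+2 A <= N) ->
  interrupted m.+1 (run m) -> ~~ interrupted m.+2 (run m.+1) ->
  rho alpha eps m.+1 <= 2 * N.
Proof.
move=> le_N /interrupted_round_certificate[u [S [S_cur mu_u lt_rho]]] st.
have [mu_same p_same] := uninterrupted_round_keeps st.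
have uS_kept : {subset u |: S <= mC1 (run m.+1) :|: mC2 (run m.+1) :|: mu (run m.+1)}.
  move=> w; rewrite mu_u !inE => /orP[->|wS]; first by rewrite orbT.
  by case: S_cur wS => [<-|[_ <-]] ->; rewrite ?orbT.
apply: (rho_le_twice_net le_N (candidates_previous S_cur) (u := u)).
  by rewrite -mu_u -mu_same candidates_mu.
by rewrite (eq_surplus v (sub_in1 uS_kept p_same)).
Qed.

Lemma rho_last_round_le m N :
  ~~ stops_after v c B alpha beta eps l order tie m.+1 ->
  (forall A, A \in candidates m.+2 -> net m.+2 A <= N) ->
  rho alpha eps m.+2 <= 2 * alpha * N.
Proof.
move=> running le_N; have rho0 := rho_gt0 m.+2 (lt_trans ltr01 alpha1) eps0.
have [st2 | st2] := boolP (interrupted m.+2 (run m.+1)).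
  have le_2N := interrupted_last_round_bound le_N st2.
  have : 0 <= (alpha - 1) * N by rewrite mulr_ge0 ?subr_ge0 ?ltW //; lra.
  lra.
have st1 : interrupted m.+1 (run m) := contraNT (@uninterrupted_round_stops m) running.
rewrite rhoS (mulrC 2) -mulrA ler_pM2l ?(lt_trans ltr01 alpha1) //.
exact: interrupted_previous_round_bound le_N st1 st2.
Qed.

End Mechanism.

Theorem lemma4p5 (R : realFieldType) (T : finType) (v : {set T} -> R) (c : T -> R)
  (B alpha beta eps : R) (l : nat) (order : seq T) (tie : nat -> T -> bool)
  (M : nat) (Sstar : {set T}) :
  v set0 = 0 -> (forall S, 0 <= v S) -> submodular v ->
  (forall u, 0 <= c u) ->
  0 < B -> 1 < alpha -> 1 < beta -> 0 < eps ->
  (l = 1 \/ l = 2)%N ->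
  perm_eq order (enum T) ->
  num_rounds v c B alpha beta eps l order tie M ->
  (2 <= M)%N ->
  Sstar \in candidates v c B alpha beta eps l order tie M ->
  (forall A, A \in candidates v c B alpha beta eps l order tie M ->
     net v c B alpha beta eps l order tie M A <= net v c B alpha beta eps l order tie M Sstar) ->
  rho alpha eps M <= 2 * alpha * net v c B alpha beta eps l order tie M Sstar.
Proof.
move=> v0 _ v_sub _ _ alpha1 _ eps0 _ order_enum [_ [_ running]] M2 _ le_net.
case: M M2 running le_net => [|[|m]] // _ running le_net.
apply: (rho_last_round_le order_enum v0 v_sub alpha1 eps0 (running m.+1 (leqnn _))).
exact: le_net.
Qed.
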